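(* Let $F\in k[[X,Y]]$ be $k$-distinguished of $Y$-degree $N\ge0$ and let $G\in k[[X,Y]]$ with $G(0,0)=0$. Then $\alpha(F,G)\subset\{0\}$ and $\beta(F,G)=0$.
   Context: Let $k$ be an algebraically closed field of characteristic zero, $R=k((X))[Y]$, and $R^{\natural}$ the set of monic irreducible polynomials of positive degree in $Y$ over $k((X))$. An element $F\in R$ is $k$-distinguished if it is of the form $F=F_0Y^N+\sum_{i<N}a_i(X)Y^i$ with $0\ne F_0\in k$ and each $a_i\in k((X))$ of positive $X$-order; such $F$ lies in $k[[X,Y]]$. Write $F=F_0\prod_{j=1}^{\chi(F)}F_j$ with $F_j\in R^{\natural}$. For nonzero $H\in R$ and $G\in R$ (with $M=\deg_YG$) the intersection multiplicity is $\mathrm{int}(H,G)=M\,\mathrm{ord}_XH_0+\frac1\nu\sum_i\mathrm{ord}_XG(X^\nu,z_i(X))$, where $H_0$ is the leading $Y$-coefficient of $H$ and $H(X^\nu,Y)=H_0(X^\nu)\prod_i(Y-z_i(X))$ with $z_i\in k((X))$ for a suitable integer $\nu>0$ ($\mathrm{ord}_X0=\infty$; for $G=0$, $\mathrm{int}(H,0)$ is $0$ if $H\in k((X))$ and $\infty$ otherwise). For $\Phi\in R^{\natural}$, $\mathrm{res}(\Phi,G)$ is the unique $\lambda\in k$ with $\mathrm{int}(\Phi,G-\lambda)>0$ if $\mathrm{int}(\Phi,G)\ge0$, and $\infty$ otherwise. For $\lambda\in k$: $\alpha_\lambda(F,G)=\{j:\mathrm{res}(F_j,G)=\lambda\}$,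 $\beta_\lambda(F,G)=\sum_{j\in\alpha_\lambda(F,G)}\mathrm{int}(F_j,G-\lambda)$, $\alpha(F,G)=\{\lambda\in k:\alpha_\lambda(F,G)\ne\emptyset\}$, $\beta(F,G)=\sum_{0\ne\lambda\in\alpha(F,G)}\beta_\lambda(F,G)$. *)

From HB Require Import structures.
From mathcomp Require Import boolp.
From mathcomp Require Import all_boot all_order all_algebra.
From mathcomp Require Import zify.

Set Implicit Arguments.
Unset Strict Implicit.
Unset Printing Implicit Defensive.

Import Order.TTheory GRing.Theory Num.Theory.
Local Open Scope ring_scope.

Section PowerSeries.
Variable K : idomainType.

Record ps := PS { psc : nat -> K }.

HB.instance Definition _ := [isNew for psc].
HB.instance Definition _ := [Choice of ps by <:].

Lemma psP (a b : ps) : (forall n, psc a n = psc b n) -> a = b.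
Proof.
by case: a b => [a] [b] /= h; congr PS; apply: functional_extensionality_dep.
Qed.

Definition ps0 := PS (fun _ => 0).
Definition ps1 := PS (fun n => (n == 0%N)%:R).
Definition psadd (a b : ps) := PS (fun n => psc a n + psc b n).
Definition psopp (a : ps) := PS (fun n => - psc a n).
Definition psmul (a b : ps) :=
  PS (fun n => \sum_(j < n.+1) psc a j * psc b (n - j)).

Lemma psaddA : associative psadd.
Proof. by move=> a b c; apply: psP => n /=; rewrite addrA. Qed.
Lemma psaddC : commutative psadd.
Proof. by move=> a b; apply: psP => n /=; rewrite addrC. Qed.
Lemma psadd0 : left_id ps0 psadd.
Proof. by move=> a; apply: psP => n /=; rewrite add0r. Qed.
Lemma psaddN : left_inverse ps0 psopp psadd.
Proof. by move=> a; apply: psP => n /=; rewrite addNr. Qed.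

HB.instance Definition _ := GRing.isZmodule.Build ps psaddA psaddC psadd0 psaddN.

Definition pstrunc n (a : ps) : {poly K} := \poly_(i < n.+1) psc a i.

Lemma pstruncE n (a : ps) i : (i <= n)%N -> (pstrunc n a)`_i = psc a i.
Proof. by move=> hi; rewrite coef_poly ltnS hi. Qed.

Lemma coefM_low (p q r : {poly K}) n :
  (forall i, (i <= n)%N -> q`_i = r`_i) -> (p * q)`_n = (p * r)`_n.
Proof.
move=> h; rewrite !coefM; apply: eq_bigr => j _; rewrite h //.
exact: leq_subr.
Qed.

Lemma psmulE (a b : ps) n i : (i <= n)%N ->
  psc (psmul a b) i = (pstrunc n a * pstrunc n b)`_i.
Proof.
move=> hi; rewrite coefM /=; apply: eq_bigr => j _.
have hj : (j <= n)%N by rewrite -ltnS (leq_trans (ltn_ord j)).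
by rewrite !pstruncE // (leq_trans (leq_subr _ _)).
Qed.

Lemma psmulA : associative psmul.
Proof.
move=> a b c; apply: psP => n.
rewrite (psmulE _ _ (leqnn n)) (psmulE _ _ (leqnn n)).
have -> : (pstrunc n a * pstrunc n (psmul b c))`_n =
          (pstrunc n a * (pstrunc n b * pstrunc n c))`_n.
  by apply: coefM_low => i hi; rewrite pstruncE // (psmulE _ _ hi).
have -> : (pstrunc n (psmul a b) * pstrunc n c)`_n =
          (pstrunc n c * (pstrunc n a * pstrunc n b))`_n.
  rewrite mulrC; apply: coefM_low => i hi.
  by rewrite pstruncE // (psmulE _ _ hi).
by rewrite mulrA (mulrC (pstrunc n c)).
Qed.

Lemma psmulC : commutative psmul.
Proof.
by move=> a b; apply: psP => n; rewrite !(psmulE _ _ (leqnn n)) mulrC.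
Qed.

Lemma pstrunc1 n : pstrunc n ps1 = 1.
Proof.
apply/polyP => i; rewrite coef_poly coefC /=.
by case: i => [|i] //=; case: ifP.
Qed.

Lemma psmul1 : left_id ps1 psmul.
Proof.
by move=> a; apply: psP => n; rewrite (psmulE _ _ (leqnn n)) pstrunc1 mul1r
   pstruncE.
Qed.

Lemma pstruncD n (a b : ps) : pstrunc n (psadd a b) = pstrunc n a + pstrunc n b.
Proof. by apply/polyP => i; rewrite coefD !coef_poly; case: ifP; rewrite ?addr0. Qed.

Lemma psmulDl : left_distributive psmul psadd.
Proof.
move=> a b c; apply: psP => n.
rewrite [LHS](psmulE _ _ (leqnn n)) pstruncD mulrDl coefD.
by rewrite -!(psmulE _ _ (leqnn n)).
Qed.

Lemma ps1_neq0 : ps1 != 0.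
Proof.
apply/eqP => /(congr1 (fun a => psc a 0)) /= /eqP; by rewrite oner_eq0.
Qed.

HB.instance Definition _ :=
  GRing.Zmodule_isComNzRing.Build ps psmulA psmulC psmul1 psmulDl ps1_neq0.

Definition psunit : {pred ps} := fun x => `[< exists y : ps, y * x = 1 >].
Definition psinv (x : ps) : ps :=
  match pselect (exists y : ps, y * x = 1) with
  | left h => proj1_sig (cid h)
  | right _ => x
  end.

Lemma psmulV : {in psunit, left_inverse 1 psinv *%R}.
Proof.
move=> x; rewrite /psunit /psinv; case: pselect => [h _|h].
  by case: (cid h).
by rewrite unfold_in asboolF.
Qed.

Lemma psunitPl (x y : ps) : y * x = 1 -> psunit x.
Proof. by move=> h; apply: asboolT; exists y. Qed.

Lemma psinv_out : {in [predC psunit], psinv =1 id}.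
Proof.
move=> x; rewrite inE /psinv; case: pselect => // h.
by rewrite /psunit unfold_in asboolT.
Qed.

HB.instance Definition _ :=
  GRing.ComNzRing_hasMulInverse.Build ps psmulV psunitPl psinv_out.

Lemma ps_min_nz (x : ps) : x != 0 ->
  exists m, psc x m != 0 /\ forall i, (i < m)%N -> psc x i = 0.
Proof.
move=> hx.
have ex : exists n, psc x n != 0.
  apply: contrapT => h; move/eqP: hx => hx; apply: hx; apply: psP => n /=.
  by apply/eqP; apply: contrapT => hn; apply: h; exists n; apply/negP.
case: (ex_minnP ex) => m hm hmin; exists m; split => // i him.
by apply/eqP; apply: contraTT him => hi; rewrite -leqNgt hmin.
Qed.

Lemma ps_integral : GRing.integral_domain_axiom ps.
Proof.
move=> x y hxy; apply: contrapT => /negP; rewrite negb_or => /andP[hx hy].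
have [m [hm hmi]] := ps_min_nz hx; have [n [hn hni]] := ps_min_nz hy.
have := congr1 (fun a => psc a (m + n)) hxy => /=.
have hm' : (m < (m + n).+1)%N by rewrite ltnS leq_addr.
rewrite (bigD1 (Ordinal hm')) //= big1.
  by rewrite addr0 addKn => /eqP; rewrite mulf_eq0 (negPf hm) (negPf hn).
move=> j /eqP hj; case: (ltngtP j m) => [hlt|hgt|heq].
- by rewrite hmi ?mul0r.
- have hj' : (m + n - j < n)%N.
    have := ltn_ord j; move: hgt; clear; lia.
  by rewrite (hni _ hj') mulr0.
- by exfalso; apply: hj; apply: val_inj.
Qed.

HB.instance Definition _ := GRing.ComUnitRing_isIntegral.Build ps ps_integral.

End PowerSeries.

Notation laurent K := {fraction (ps K)}.

Section Laurent.
Variable K : idomainType.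
Local Notation L := (laurent K).
Local Notation "x %:F" := (@FracField.tofrac (ps K) x).

(* X-order of a power series (None encodes ord 0 = +oo) *)
Definition ps_ord (a : ps K) : option nat :=
  match pselect (exists n, psc a n != 0) with
  | left h => Some (@ex_minn (fun n => psc a n != 0) h)
  | right _ => None
  end.

(* X-order of a Laurent series, computed on a representative n/d
   (None encodes ord_X 0 = +oo) *)
Definition ordX (x : L) : option int :=
  let r := repr x in
  match ps_ord \n_r, ps_ord \d_r with
  | Some a, Some b => Some (a%:Z - b%:Z)
  | _, _ => None
  end.

Definition ps_subst (nu : nat) (a : ps K) : ps K :=
  PS (fun n => if (nu %| n)%N then psc a (n %/ nu)%N else 0).

Definition substX (nu : nat) (x : L) : L :=
  let r := repr x in (ps_subst nu \n_r)%:F / (ps_subst nu \d_r)%:F.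

Definition ps_cst (c : K) : ps K := PS (fun n => if n == 0%N then c else 0).
Definition cstL (c : K) : L := (ps_cst c)%:F.

Definition in_psX (x : L) : Prop := exists a : ps K, x = a%:F.

(* Extended rationals Q u {+oo}  (None = +oo)                               *)
Definition ext := option rat.
Definition ext_add (u v : ext) : ext :=
  match u, v with Some a, Some b => Some (a + b) | _, _ => None end.
Definition ext_sum (s : seq ext) : ext := foldr ext_add (Some 0) s.
Definition ext_ge0 (u : ext) : bool := if u is Some a then 0 <= a else true.
Definition ext_gt0 (u : ext) : bool := if u is Some a then 0 < a else true.

Definition ordQ (x : L) : ext :=
  match ordX x with Some z => Some (z%:~R) | None => None end.

Definition puiseux_roots (H : {poly L}) (nu : nat) (zs : seq L) : Prop :=
  (0 < nu)%N /\
  map_poly (substX nu) H = substX nu (lead_coef H) *: \prod_(z <- zs) ('X - z%:P).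

(* int(H,G) = M ord_X H_0 + (1/nu) sum_i ord_X G(X^nu, z_i(X)),  M = deg_Y G.
   For G = 0: 0 if H is constant in Y, +oo otherwise.
   (If no Puiseux factorization existed -- which never happens over an
   algebraically closed field of characteristic 0 -- the value is +oo.) *)
Definition intm (H G : {poly L}) : ext :=
  if G == 0 then (if (size H <= 1)%N then Some 0 else None)
  else
  match pselect (exists w : nat * seq L, puiseux_roots H w.1 w.2) with
  | left h =>
      let w := proj1_sig (cid h) in
      let nu := w.1 in let zs := w.2 in
      ext_add
        (match ordQ (lead_coef H) with
         | Some o => Some ((size G).-1%:R * o)
         | None => None end)
        (match ext_sum [seq ordQ ((map_poly (substX nu) G).[z]) | z <- zs] with
         | Some s => Some (s / nu%:R)
         | None => None end)
  | right _ => None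
  end.

Definition res (Phi G : {poly L}) : option K :=
  if ext_ge0 (intm Phi G) then
    match pselect (exists! lam : K, ext_gt0 (intm Phi (G - (cstL lam)%:P))) with
    | left h => Some (proj1_sig (cid h))
    | right _ => None
    end
  else None.

Definition factorization (F : {poly L}) (F0 : L) (Fs : seq {poly L}) : Prop :=
  F = F0 *: \prod_(Phi <- Fs) Phi /\
  (forall Phi, Phi \in Fs -> Phi \is monic /\ irreducible_poly Phi).

Definition alpha_lam (Fs : seq {poly L}) (G : {poly L}) (lam : K) : seq nat :=
  [seq j <- iota 0 (size Fs) | res (nth 0 Fs j) G == Some lam].

Definition beta_lam (Fs : seq {poly L}) (G : {poly L}) (lam : K) : ext :=
  ext_sum [seq intm (nth 0 Fs j) (G - (cstL lam)%:P) | j <- alpha_lam Fs G lam].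

Definition alpha (Fs : seq {poly L}) (G : {poly L}) : seq K :=
  undup (pmap (fun Phi => res Phi G) Fs).

Definition beta (Fs : seq {poly L}) (G : {poly L}) : ext :=
  ext_sum [seq beta_lam Fs G lam | lam <- alpha Fs G & lam != 0].

Definition k_distinguished (F : {poly L}) (N : nat) : Prop :=
  size F = N.+1 /\
  (exists F0 : K, F0 != 0 /\ lead_coef F = cstL F0) /\
  (forall i, (i < N)%N ->
     match ordX F`_i with Some o => 0 < o | None => true end).

(* G in K[[X,Y]] (i.e. G in K[[X]][Y]) with G(0,0) = 0 *)
Definition in_psXY (G : {poly L}) : Prop := forall i, in_psX G`_i.
Definition vanishes_at_origin (G : {poly L}) : Prop :=
  exists a : ps K, G`_0 = a%:F /\ psc a 0 = 0.

End Laurent.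

(* Over the Puiseux substitution X |-> X^nu, a k-distinguished F has a leading
   coefficient of X-order 0 and all other coefficients of positive X-order, so
   none of its roots z can have ord_X z <= 0: the leading term would have
   strictly smaller order than all the others.  Hence every Puiseux root of a
   factor F_j has positive order, and so has G(X^nu, z) because G lies in
   k[[X]][Y] and vanishes at the origin.  Thus int(F_j, G) > 0, i.e. lambda = 0
   satisfies the condition defining res(F_j, G); by uniqueness res(F_j, G) is 0
   whenever it is finite.  So alpha(F, G) is contained in {0} and beta(F, G) is
   an empty sum. *)

From HB Require Import structures.
From mathcomp Require Import boolp.
From mathcomp Require Import all_boot all_order all_algebra.
From mathcomp Require Import zify generic_quotient.

Set Implicit Arguments.
Unset Strict Implicit.
Unset Printing Implicit Defensive.
Import Order.TTheory GRing.Theory Num.Theory.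
Local Open Scope ring_scope.

Section PowerSeriesOrder.
Variable K : idomainType.
Implicit Types a b : ps K.

Definition psord a : nat := odflt 0%N (ps_ord a).

Lemma ps_ordE a : ps_ord a = if a == 0 then None else Some (psord a).
Proof.
rewrite /psord /ps_ord; have [->|a_neq0] := eqVneq a 0.
  by case: pselect => // -[n]; rewrite eqxx.
case: pselect => // noz.
by have [m [am _]] := ps_min_nz a_neq0; case: noz; exists m.
Qed.

Lemma psordP a : a != 0 ->
  psc a (psord a) != 0 /\ forall i, (i < psord a)%N -> psc a i = 0.
Proof.
rewrite /psord /ps_ord; case: pselect => [ex _ | noz a_neq0].
  case: ex_minnP => m am min_m; split => // i lt_im.
  by apply/eqP; apply: contraTT lt_im => ai; rewrite -leqNgt min_m.
by have [m [am _]] := ps_min_nz a_neq0; case: noz; exists m.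
Qed.

Lemma ps_neq0 a i : psc a i != 0 -> a != 0.
Proof. by apply: contraNneq => ->. Qed.

Lemma psord_eq a m : psc a m != 0 -> (forall i, (i < m)%N -> psc a i = 0) ->
  psord a = m.
Proof.
move=> am below_m; have [ao below_o] := psordP (ps_neq0 am).
case: (ltngtP (psord a) m) => [/below_m ao0|/below_o am0|//].
  by rewrite ao0 eqxx in ao.
by rewrite am0 eqxx in am.
Qed.

Lemma psord_ge a m : a != 0 -> (forall i, (i < m)%N -> psc a i = 0) ->
  (m <= psord a)%N.
Proof.
move=> a_neq0 below_m; have [ao _] := psordP a_neq0.
by rewrite leqNgt; apply: contra ao => /below_m ->.
Qed.

Lemma psord0 a : psc a 0 != 0 -> psord a = 0%N.
Proof. by move=> a0; apply: psord_eq. Qed.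

Lemma psc_mul_low a b m n :
  (forall i, (i < m)%N -> psc a i = 0) -> (forall i, (i < n)%N -> psc b i = 0) ->
  (forall i, (i < m + n)%N -> psc (a * b) i = 0) /\
  psc (a * b) (m + n) = psc a m * psc b n.
Proof.
move=> a_low b_low; split=> [i lt_i|]; rewrite /= /psmul /=.
  apply: big1 => j _; case: (ltnP j m) => [/a_low -> | le_mj]; first by rewrite mul0r.
  by rewrite b_low ?mulr0 //; have := ltn_ord j; lia.
have lt_m : (m < (m + n).+1)%N by rewrite ltnS leq_addr.
rewrite (bigD1 (Ordinal lt_m)) //= addKn big1 ?addr0 // => j /eqP ne_jm.
case: (ltngtP j m) => [/a_low -> | lt_mj | eq_jm]; first by rewrite mul0r.
  by rewrite b_low ?mulr0 //; have := ltn_ord j; lia.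
by case: ne_jm; apply: val_inj.
Qed.

Lemma psordM a b : a != 0 -> b != 0 -> psord (a * b) = (psord a + psord b)%N.
Proof.
move=> a_neq0 b_neq0; have [ao a_low] := psordP a_neq0.
have [bo b_low] := psordP b_neq0; have [ab_low ab_o] := psc_mul_low a_low b_low.
by apply: psord_eq => //; rewrite ab_o mulf_neq0.
Qed.

Lemma psordD a b : a != 0 -> b != 0 -> a + b != 0 ->
  (minn (psord a) (psord b) <= psord (a + b)%R)%N.
Proof.
move=> a_neq0 b_neq0 ab_neq0; apply: psord_ge => // i lt_i.
have [_ a_low] := psordP a_neq0; have [_ b_low] := psordP b_neq0.
by rewrite /= a_low ?b_low ?addr0 //; lia.
Qed.

Lemma psordN a : psord (- a) = psord a.
Proof.
have [->|a_neq0] := eqVneq a 0; first by rewrite oppr0.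
have [ao a_low] := psordP a_neq0.
by apply: psord_eq => [|i /a_low /= ->]; rewrite ?oppr0 ?oppr_eq0.
Qed.

End PowerSeriesOrder.

Section LaurentOrder.
Variable K : idomainType.
Local Notation L := (laurent K).
Local Notation "x %:F" := (@FracField.tofrac (ps K) x).
Implicit Types (a b c d : ps K) (x y z : L).
Local Open Scope quotient_scope.

Lemma tofrac_divE a b : b != 0 -> a%:F / b%:F = \pi_L (Ratio a b).
Proof.
move=> b_neq0; apply: (mulIf (x := b%:F)); first by rewrite tofrac_eq0.
rewrite divfK ?tofrac_eq0 //; unlock FracField.tofrac.
rewrite -[RHS](@FracField.pi_mul (ps K) (Ratio a b) (Ratio b 1)).
apply/eqmodP; rewrite /= FracField.equivfE /FracField.mulf.
by rewrite !numden_Ratio ?mulf_neq0 ?oner_neq0 // mulr1 mul1r mulrC.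
Qed.

Lemma repr_fracE x : x = (\n_(repr x))%:F / (\d_(repr x))%:F.
Proof. by rewrite tofrac_divE ?denom_ratioP // Ratio_numden reprK. Qed.

Lemma fracP x : exists a b, b != 0 /\ x = a%:F / b%:F.
Proof. by exists \n_(repr x), \d_(repr x); rewrite -repr_fracE denom_ratioP. Qed.

Lemma repr_frac_cross a b : b != 0 ->
  \n_(repr (a%:F / b%:F)) * b = \d_(repr (a%:F / b%:F)) * a.
Proof.
move=> b_neq0; rewrite tofrac_divE //.
by have := FracField.equivf_l (Ratio a b); rewrite !numden_Ratio.
Qed.

Lemma frac_eq0 a b : b != 0 -> (a%:F / b%:F == 0) = (a == 0).
Proof.
by move=> b_neq0; rewrite mulf_eq0 invr_eq0 !tofrac_eq0 (negPf b_neq0) orbF.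
Qed.

Lemma frac_divB a b c d : b != 0 -> d != 0 ->
  a%:F / b%:F - c%:F / d%:F = (a * d - c * b)%:F / (b * d)%:F.
Proof.
move=> b_neq0 d_neq0; rewrite -mulNr addf_div ?tofrac_eq0 //.
by rewrite mulNr tofracB !tofracM.
Qed.

Lemma frac_divM a b c d : a%:F / b%:F * (c%:F / d%:F) = (a * c)%:F / (b * d)%:F.
Proof. by rewrite mulf_div !tofracM. Qed.

Definition ordL x : int := (psord \n_(repr x))%:Z - (psord \d_(repr x))%:Z.

Lemma ordL_frac a b : a != 0 -> b != 0 ->
  ordL (a%:F / b%:F) = (psord a)%:Z - (psord b)%:Z.
Proof.
move=> a_neq0 b_neq0; have cross := repr_frac_cross a b_neq0; rewrite /ordL.
set n := \n_(repr _) in cross *; set d := \d_(repr _) in cross *.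
have d_neq0 : d != 0 by apply: denom_ratioP.
have n_neq0 : n != 0.
  by apply: contraNneq (mulf_neq0 d_neq0 a_neq0) => n0; rewrite -cross n0 mul0r.
by have := congr1 (@psord K) cross; rewrite !psordM //; lia.
Qed.

Lemma ordX_ordL x : ordX x = if x == 0 then None else Some (ordL x).
Proof.
rewrite /ordX !ps_ordE (negPf (denom_ratioP _)).
have := repr_fracE x; set n := \n_(repr x); set d := \d_(repr x) => x_nd.
have -> : (x == 0) = (n == 0) by rewrite {1}x_nd frac_eq0 ?denom_ratioP.
by case: ifP.
Qed.

Lemma ordL_tofrac a : a != 0 -> ordL a%:F = psord a.
Proof.
move=> a_neq0; rewrite -[a%:F]divr1 -tofrac1 ordL_frac ?oner_neq0 //.
by rewrite (@psord0 _ 1) ?subr0 //= oner_neq0.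
Qed.

Lemma ordL1 : ordL 1 = 0.
Proof. by rewrite -tofrac1 ordL_tofrac ?oner_neq0 // psord0 //= oner_neq0. Qed.

Lemma ordLM x y : x != 0 -> y != 0 -> ordL (x * y) = ordL x + ordL y.
Proof.
have [a [b [b_neq0 ->]]] := fracP x; have [c [d [d_neq0 ->]]] := fracP y.
rewrite !frac_eq0 // => a_neq0 c_neq0.
by rewrite frac_divM !ordL_frac ?mulf_neq0 // !psordM //; lia.
Qed.

Lemma ordLN x : ordL (- x) = ordL x.
Proof.
have [a [b [b_neq0 ->]]] := fracP x.
have [->|a_neq0] := eqVneq a 0; first by rewrite tofrac0 mul0r oppr0.
by rewrite -mulNr -tofracN !ordL_frac ?oppr_eq0 // psordN.
Qed.

Lemma ordLX x n : x != 0 -> ordL (x ^+ n) = ordL x *+ n.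
Proof.
move=> x_neq0; elim: n => [|n IHn]; first by rewrite ordL1.
by rewrite exprS ordLM ?expf_neq0 // IHn mulrS.
Qed.

Lemma cstL_eq0 (c : K) : (cstL c == 0) = (c == 0).
Proof.
rewrite /cstL tofrac_eq0; apply/eqP/eqP => [/(congr1 (fun p => psc p 0%N)) //|->].
by apply: psP => n /=; case: ifP.
Qed.

Lemma ordL_cstL (c : K) : c != 0 -> ordL (cstL c) = 0.
Proof. by move=> c_neq0; rewrite ordL_tofrac ?psord0 // (@ps_neq0 _ _ 0). Qed.

(* [ordL 0] is junk: [ordL_ge x m] reads [ord_X x >= m], with [ord_X 0 = +oo]. *)
Definition ordL_ge x (m : int) : Prop := x != 0 -> m <= ordL x.

Lemma ordL_ge0 m : ordL_ge 0 m.
Proof. by rewrite /ordL_ge eqxx. Qed.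

Lemma ordX_gt0 x :
  match ordX x with Some o => 0 < o | None => true end -> ordL_ge x 1.
Proof.
rewrite ordX_ordL; case: eqP => [-> _|_ x_gt0 _]; first exact: ordL_ge0.
by rewrite -gtz0_ge1.
Qed.

Lemma ordL_geW x m n : n <= m -> ordL_ge x m -> ordL_ge x n.
Proof. by move=> le_nm ge_x /ge_x; apply: le_trans. Qed.

Lemma ordL_geN x m : ordL_ge (- x) m = ordL_ge x m.
Proof. by rewrite /ordL_ge ordLN oppr_eq0. Qed.

Lemma ordL_geD x y m : ordL_ge x m -> ordL_ge y m -> ordL_ge (x + y) m.
Proof.
have [->|x_neq0] := eqVneq x 0; first by rewrite add0r.
have [->|y_neq0] := eqVneq y 0; first by rewrite addr0.
move=> /(_ x_neq0) + /(_ y_neq0); move: x_neq0 y_neq0.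
have [a [b [b_neq0 ->]]] := fracP x; have [c [d [d_neq0 ->]]] := fracP y.
rewrite !frac_eq0 // => a_neq0 c_neq0; rewrite !ordL_frac // => ge_x ge_y.
rewrite addf_div ?tofrac_eq0 // -!tofracM -tofracD.
rewrite /ordL_ge frac_eq0 ?mulf_neq0 // => s_neq0; rewrite ordL_frac ?mulf_neq0 //.
have := psordD (mulf_neq0 a_neq0 d_neq0) (mulf_neq0 c_neq0 b_neq0) s_neq0.
rewrite !psordM //; move: ge_x ge_y (psord (_ + _)%R).
move: (psord a) (psord b) (psord c) (psord d) => pa pb pc pd; lia.
Qed.

Lemma ordL_geM x y m n : ordL_ge x m -> ordL_ge y n -> ordL_ge (x * y) (m + n).
Proof.
move=> ge_x ge_y; rewrite /ordL_ge mulf_eq0 negb_or => /andP[x_neq0 y_neq0].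
by rewrite (ordLM x_neq0 y_neq0); exact: lerD (ge_x x_neq0) (ge_y y_neq0).
Qed.

Lemma ordL_ge_sum (I : Type) (r : seq I) (P : pred I) (f : I -> L) m :
  (forall i, P i -> ordL_ge (f i) m) -> ordL_ge (\sum_(i <- r | P i) f i) m.
Proof.
move=> ge_f; apply: (big_ind (fun s => ordL_ge s m)); [exact: ordL_ge0 | | exact: ge_f].
by move=> s t; apply: ordL_geD.
Qed.

Lemma ordL_geX x m n : ordL_ge x m -> ordL_ge (x ^+ n) (m *+ n).
Proof.
move=> ge_x; elim: n => [|n IHn]; first by rewrite expr0 mulr0n => _; rewrite ordL1.
by rewrite exprS mulrS; apply: ordL_geM.
Qed.

Lemma ordL_ge_tofrac a (m : nat) :
  (forall i, (i < m)%N -> psc a i = 0) -> ordL_ge a%:F m.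
Proof.
move=> a_low; rewrite /ordL_ge tofrac_eq0 => a_neq0.
by rewrite ordL_tofrac // lez_nat psord_ge.
Qed.

Lemma ordL_ge1_root (P : {poly L}) z :
  lead_coef P != 0 -> ordL (lead_coef P) = 0 ->
  (forall i, (i < (size P).-1)%N -> ordL_ge P`_i 1) -> root P z -> ordL_ge z 1.
Proof.
move=> lc_neq0 lc_ord0 low_P; set N := (size P).-1.
have size_P : size P = N.+1 by rewrite prednK // lt0n size_poly_eq0 -lead_coef_eq0.
have split_P : P.[z] = \sum_(i < N) P`_i * z ^+ i + lead_coef P * z ^+ N.
  by rewrite horner_coef size_P big_ord_recr lead_coefE size_P.
move=> /rootP; rewrite split_P => /eqP; rewrite addr_eq0 => /eqP sum_low z_neq0.
rewrite leNgt; apply/negP => lt_z.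
have oz_le0 : ordL z <= 0 by move: lt_z; rewrite -[1]add0r ltzD1.
have lead_neq0 : lead_coef P * z ^+ N != 0 := mulf_neq0 lc_neq0 (expf_neq0 _ z_neq0).
have ord_lead : ordL (lead_coef P * z ^+ N) = ordL z *+ N.
  by rewrite (ordLM lc_neq0 (expf_neq0 _ z_neq0)) lc_ord0 (ordLX N z_neq0) add0r.
have : ordL_ge (- (lead_coef P * z ^+ N)) (ordL z *+ N + 1).
  rewrite -sum_low; apply: ordL_ge_sum => i _.
  apply: (@ordL_geW _ (1 + ordL z *+ i)).
    by rewrite addrC lerD2l; apply: ler_wnMn2l oz_le0 _ _ (ltnW (ltn_ord i)).
  by apply: ordL_geM; [apply: low_P | apply: ordL_geX].
by rewrite ordL_geN => /(_ lead_neq0); rewrite ord_lead gerDl ler10.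
Qed.

Lemma ordL_ge1_horner (P : {poly L}) z :
  (forall i, ordL_ge P`_i 0) -> ordL_ge P`_0 1 -> ordL_ge z 1 -> ordL_ge P.[z] 1.
Proof.
move=> P_ge0 P0_ge1 z_ge1; rewrite horner_coef.
case: (size P) => [|n]; first by rewrite big_ord0; apply: ordL_ge0.
rewrite big_ord_recl expr0 mulr1; apply: ordL_geD; first exact: P0_ge1.
apply: ordL_ge_sum => i _; apply: (@ordL_geW _ (0 + 1 *+ (bump 0 i))).
  by rewrite add0r /bump /=; lia.
by apply: ordL_geM; [apply: P_ge0 | apply: ordL_geX].
Qed.

End LaurentOrder.

Section Substitution.
Variables (K : idomainType) (nu : nat).
Hypothesis nu_gt0 : (0 < nu)%N.
Local Notation L := (laurent K).
Local Notation "x %:F" := (@FracField.tofrac (ps K) x).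
Local Notation sb := (@ps_subst K nu).
Local Notation sg := (@substX K nu).
Implicit Types (a b c d : ps K) (x y z : L).

Lemma ps_subst_truncE c i j : (j <= i)%N ->
  (pstrunc i (sb c))`_j = (pstrunc i c \Po 'X^nu)`_j.
Proof.
move=> le_ji; rewrite pstruncE // coef_comp_poly_Xn //=; case: ifP => // _.
by rewrite pstruncE // (leq_trans (leq_div _ _) le_ji).
Qed.

Lemma ps_subst_is_zmod_morphism : zmod_morphism sb.
Proof. by move=> a b; apply: psP => n /=; case: ifP; rewrite ?subr0. Qed.

(* The coefficient of index i of a product only involves truncations at
   degree i, where the substitution is polynomial composition with X^nu. *)
Lemma ps_subst_is_monoid_morphism : monoid_morphism sb.
Proof.
have sbM a b : sb (a * b) = sb a * sb b.
  apply: psP => i; rewrite [RHS](psmulE _ _ (leqnn i)).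
  rewrite [in RHS]mulrC (coefM_low _ (ps_subst_truncE a (i:=i))) [in RHS]mulrC.
  rewrite (coefM_low _ (ps_subst_truncE b (i:=i))) -comp_polyM.
  rewrite coef_comp_poly_Xn //=; case: ifP => // _.
  by rewrite -(psmulE _ _ (leq_div i nu)).
split=> //; apply: psP => i.
rewrite -[LHS](pstruncE _ (leqnn i)) -[RHS](pstruncE _ (leqnn i)).
by rewrite ps_subst_truncE // !pstrunc1 rmorph1.
Qed.

HB.instance Definition _ :=
  GRing.isZmodMorphism.Build (ps K) (ps K) sb ps_subst_is_zmod_morphism.
HB.instance Definition _ :=
  GRing.isMonoidMorphism.Build (ps K) (ps K) sb ps_subst_is_monoid_morphism.

Lemma psc_subst_mul j a : psc (sb a) (j * nu) = psc a j.
Proof. by rewrite /= dvdn_mull // mulnK. Qed.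

Lemma ps_subst_eq0 a : (sb a == 0) = (a == 0).
Proof.
apply/eqP/eqP => [sa0|->]; last exact: rmorph0.
by apply: psP => j; rewrite -psc_subst_mul sa0.
Qed.

Lemma psord_subst a : a != 0 -> psord (sb a) = (psord a * nu)%N.
Proof.
move=> a_neq0; have [ao a_low] := psordP a_neq0.
apply: psord_eq => [|i lt_i /=]; first by rewrite psc_subst_mul.
by case: ifP => // _; apply: a_low; rewrite ltn_divLR.
Qed.

Lemma substX_frac a b : b != 0 -> sg (a%:F / b%:F) = (sb a)%:F / (sb b)%:F.
Proof.
move=> b_neq0; rewrite /substX; have cross := repr_frac_cross a b_neq0.
set n := \n_(repr _) in cross *; set d := \d_(repr _) in cross *.
apply/eqP; rewrite eqr_div ?tofrac_eq0 ?ps_subst_eq0 ?denom_ratioP //.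
by rewrite -!tofracM -!rmorphM cross mulrC.
Qed.

Lemma substX_is_zmod_morphism : zmod_morphism sg.
Proof.
move=> x y; have [a [b [b_neq0 ->]]] := fracP x; have [c [d [d_neq0 ->]]] := fracP y.
rewrite frac_divB // !substX_frac ?mulf_neq0 // frac_divB ?ps_subst_eq0 //.
by rewrite rmorphB !rmorphM.
Qed.

Lemma substX_is_monoid_morphism : monoid_morphism sg.
Proof.
split.
  have one : (1 : L) = 1%:F / 1%:F by rewrite tofrac1 divr1.
  by rewrite one substX_frac ?oner_neq0 // !rmorph1.
move=> x y; have [a [b [b_neq0 ->]]] := fracP x; have [c [d [d_neq0 ->]]] := fracP y.
by rewrite frac_divM !substX_frac ?mulf_neq0 // frac_divM !rmorphM.
Qed.

HB.instance Definition _ := GRing.isZmodMorphism.Build L L sg substX_is_zmod_morphism.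
HB.instance Definition _ :=
  GRing.isMonoidMorphism.Build L L sg substX_is_monoid_morphism.

Lemma ordL_substX x : x != 0 -> ordL (sg x) = ordL x *+ nu.
Proof.
have [a [b [b_neq0 ->]]] := fracP x; rewrite frac_eq0 // => a_neq0.
by rewrite substX_frac // !ordL_frac ?ps_subst_eq0 // !psord_subst //; nia.
Qed.

Lemma ordL_ge_substX x m : 0 <= m -> ordL_ge x m -> ordL_ge (sg x) m.
Proof.
move=> m_ge0 ge_x; rewrite /ordL_ge fmorph_eq0 => x_neq0.
by rewrite ordL_substX //; have := ge_x x_neq0; nia.
Qed.

Lemma ordL_ge1_root_substX F N Phi z : k_distinguished F N -> Phi %| F ->
  root (map_poly sg Phi) z -> ordL_ge z 1.
Proof.
move=> [size_F [[F0 [F0_neq0 lcF]] low_F]] Phi_F Phi_z.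
have F0L_neq0 : cstL F0 != 0 by rewrite cstL_eq0.
have F_z : root (map_poly sg F) z by apply: (root_dvdp _ Phi_z); rewrite dvdp_map.
apply: (ordL_ge1_root _ _ _ F_z); rewrite ?lead_coef_map ?lcF.
- by rewrite fmorph_eq0.
- by rewrite (ordL_substX F0L_neq0) (ordL_cstL F0_neq0) mul0rn.
move=> i; rewrite size_map_poly size_F coef_map => /low_F /ordX_gt0 Fi_ge1.
exact: ordL_ge_substX ler01 Fi_ge1.
Qed.

Lemma ordL_ge1_horner_substX G z :
  in_psXY G -> vanishes_at_origin G -> ordL_ge z 1 ->
  ordL_ge (map_poly sg G).[z] 1.
Proof.
move=> G_ps [a [G0 a0]] z_ge1; apply: ordL_ge1_horner z_ge1 => [i|].
  rewrite coef_map; have [b ->] := G_ps i.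
  apply: ordL_ge_substX (lexx 0) _; exact: (@ordL_ge_tofrac _ _ 0).
rewrite coef_map G0; apply: ordL_ge_substX ler01 _.
by apply: (@ordL_ge_tofrac _ _ 1) => i; rewrite ltnS leqn0 => /eqP ->.
Qed.

Lemma puiseux_roots_monic Phi zs : Phi \is monic -> puiseux_roots Phi nu zs ->
  size zs = (size Phi).-1 /\ {in zs, forall z, root (map_poly sg Phi) z}.
Proof.
move=> /monicP lc1 [_ fact]; rewrite lc1 rmorph1 scale1r in fact.
split=> [|z z_zs]; first by rewrite -(size_map_poly sg) fact size_prod_XsubC.
by rewrite fact root_prod_XsubC; exact: z_zs.
Qed.

End Substitution.

Section IntersectionMultiplicity.
Variable K : idomainType.
Local Notation L := (laurent K).

Lemma ext_add_gt0 u v : ext_gt0 u -> ext_ge0 v -> ext_gt0 (ext_add u v).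
Proof. by case: u v => [a|] [b|] //= a_gt0 b_ge0; rewrite ltr_wpDr. Qed.

Lemma ext_sum_ge0 s : all ext_ge0 s -> ext_ge0 (ext_sum s).
Proof.
elim: s => [|u s IHs] //= /andP[u_ge0 /IHs].
by case: u u_ge0 => [a|] //; case: ext_sum => [b|] //= a_ge0 b_ge0; rewrite addr_ge0.
Qed.

Lemma ext_sum_gt0 s : all ext_gt0 s -> s != [::] -> ext_gt0 (ext_sum s).
Proof.
case: s => [|u s] //= /andP[u_gt0 s_gt0] _; apply: ext_add_gt0 u_gt0 _.
by apply/ext_sum_ge0/allP => -[a|] // /(allP s_gt0); apply: ltW.
Qed.

Lemma ordQ1 : ordQ (1 : L) = Some 0.
Proof. by rewrite /ordQ ordX_ordL oner_eq0 ordL1. Qed.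

Lemma ordQ_gt0 (x : L) : ordL_ge x 1 -> ext_gt0 (ordQ x).
Proof.
rewrite /ordQ ordX_ordL; case: eqP => [//|/eqP x_neq0 /(_ x_neq0)].
by rewrite /= ltr0z gtz0_ge1.
Qed.

Lemma intm_gt0 (Phi G : {poly L}) : Phi \is monic -> (1 < size Phi)%N ->
  (forall nu z, (0 < nu)%N -> root (map_poly (substX nu) Phi) z ->
     ordL_ge (map_poly (substX nu) G).[z] 1) ->
  ext_gt0 (intm Phi G).
Proof.
move=> Phi_monic Phi_size G_roots; rewrite /intm.
have [_|G_neq0] := eqVneq G 0; first by rewrite leqNgt Phi_size.
case: pselect => [ex|//]; case: (cid ex) => -[nu zs] /= puis.
have [nu_gt0 _] := puis.
have [size_zs zs_roots] := puiseux_roots_monic nu_gt0 Phi_monic puis.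
rewrite (monicP Phi_monic) ordQ1 mulr0.
have : ext_gt0 (ext_sum [seq ordQ (map_poly (substX nu) G).[z] | z <- zs]).
  apply: ext_sum_gt0; last by rewrite -size_eq0 size_map size_zs; lia.
  apply/allP => _ /mapP[z z_zs ->]; apply/ordQ_gt0/(G_roots _ _ nu_gt0).
  exact: zs_roots.
by case: ext_sum => [s|] //= s_gt0; rewrite add0r divr_gt0 ?ltr0n.
Qed.

Lemma res_eq0 (Phi G : {poly L}) lam :
  ext_gt0 (intm Phi G) -> res Phi G = Some lam -> lam = 0.
Proof.
move=> int_gt0; rewrite /res; case: ifP => // _.
case: pselect => // ex [<-]; case: (cid ex) => lam0 [_ uniq_lam0] /=.
apply: uniq_lam0; have /eqP -> : cstL (0 : K) == 0 by rewrite cstL_eq0.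
by rewrite polyC0 subr0.
Qed.

Lemma factorization_dvdp (F : {poly L}) F0 Fs Phi :
  factorization F F0 Fs -> Phi \in Fs -> Phi %| F.
Proof.
move=> [-> _] Phi_Fs; rewrite -mul_polyC (big_rem _ Phi_Fs) /= mulrCA.
exact: dvdp_mulIl.
Qed.

End IntersectionMultiplicity.

Theorem mainTheorem4 (k : closedFieldType) (Hchar : [pchar k] =i pred0)
    (F G : {poly laurent k}) (N : nat) (Fs : seq {poly laurent k}) :
  k_distinguished F N ->
  in_psXY G -> vanishes_at_origin G ->
  factorization F (lead_coef F) Fs ->
  (forall lam : k, lam \in alpha Fs G -> lam = 0) /\ beta Fs G = Some 0.
Proof.
move=> F_dist G_ps G_0 F_fact.
have res_Fs Phi lam : Phi \in Fs -> res Phi G = Some lam -> lam = 0.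
  move=> Phi_Fs; have [Phi_monic [Phi_size _]] := F_fact.2 Phi Phi_Fs.
  apply: res_eq0; apply: (intm_gt0 Phi_monic Phi_size) => nu z nu_gt0 Phi_z.
  apply: (ordL_ge1_horner_substX nu_gt0 G_ps G_0).
  apply: (ordL_ge1_root_substX nu_gt0 F_dist _ Phi_z).
  exact: factorization_dvdp F_fact Phi_Fs.
have alpha0 lam : lam \in alpha Fs G -> lam = 0.
  by rewrite mem_undup mem_pmap => /mapP[Phi Phi_Fs /esym]; apply: res_Fs.
split=> //; rewrite /beta (eq_in_filter (a2 := pred0)) ?filter_pred0 // => lam /alpha0 ->.
by rewrite eqxx.
Qed.
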